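(* For all $m\ge 1$ and all $n\ge m$, $$d_1(W_{n,m},D)\ge \frac{2\big(|m-2|\log n-|(m+2)h_m-3|\big)}{n},$$ where $W_{n,m}=\frac1n C_{n,m}-1$, $C_{n,m}$ is the number of comparisons made by Quickselect to find the $m$-th smallest element of a list of $n$ distinct numbers, $D$ has the standard Dickman distribution, and $h_k=\sum_{j=1}^k 1/j$.
   Context: Quickselect (to find the $m$-th smallest element of a list of $n\ge m$ distinct numbers): a pivot is chosen uniformly at random from the list and compared with each of the other $n-1$ elements; the elements smaller than the pivot form the left sublist and those larger form the right sublist. If the left sublist has size $m-1$, the pivot is the answer and the procedure stops; if it has size $\ge m$, the procedure recurses on the left sublist to find its $m$-th smallest element; otherwise (left size $L<m-1$) it recurses on the right sublist to find its $(m-L-1)$-th smallest element. All pivot choices are independent. The standard Dickman distribution is the unique law of a non-negative random variable $D$ satisfying $D=_d U(D+1)$, where $U\sim\mathcal U[0,1]$ is independent of $D$. The Wasserstein distance is $d_1(X,Y)=\sup_{h\in \mathrm{Lip}_1}|Eh(X)-Eh(Y)|$, where $\mathrm{Lip}_1=\{h:|h(y)-h(x)|\le|y-x|\}$. *)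

From HB Require Import structures.
From mathcomp Require Import all_boot all_order all_algebra.
From mathcomp Require Import all_classical all_reals all_analysis.
Set Implicit Arguments. Unset Strict Implicit. Unset Printing Implicit Defensive.
Import Order.TTheory GRing.Theory Num.Theory.
Import numFieldNormedType.Exports.
Local Open Scope classical_set_scope.
Local Open Scope ring_scope.

(* Law of the number of comparisons C_{n,m} of Quickselect, as a finite list of
   weighted outcomes (probability, number of comparisons).  [fuel] bounds the
   recursion depth; [qs_law R n n m] is the law of C_{n,m}.  A pivot whose rank is
   L+1 (left sublist of size L, each L < n with probability 1/n) costs n-1
   comparisons; then stop if L = m-1, recurse on (L, m) if L >= m, otherwise on
   (n-L-1, m-L-1). *)
Fixpoint qs_law (R : realType) (fuel n m : nat) : seq (R * nat) :=
  match fuel with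
  | 0 => [::]
  | f.+1 =>
    flatten [seq [seq (pc.1 / n%:R, (pc.2 + n.-1)%N) |
                   pc <- if L.+1 == m then [:: (1, 0%N)]
                         else if (m <= L)%N then qs_law R f L m
                         else qs_law R f (n - L.+1) (m - L.+1)]
            | L <- iota 0 n]
  end.

Definition EW (R : realType) (n m : nat) (h : R -> R) : R :=
  \sum_(pc <- qs_law R n n m) pc.1 * h (pc.2%:R / n%:R - 1).

Definition lip1 (R : realType) (h : R -> R) : Prop :=
  forall x y : R, `|h y - h x| <= `|y - x|.

(* The standard Dickman law: the law of a non-negative random variable D with
   D =_d U (D + 1), U ~ Unif[0,1] independent of D; i.e. for every Borel A,
   P(D in A) = \int_0^1 P(u (D + 1) in A) du. *)
Definition dickman_law (R : realType) (mu : probability R R) : Prop :=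
  mu [set x : R | 0 <= x] = 1%E /\
  forall A : set R, measurable A ->
    mu A = (\int[lebesgue_measure]_(u in [set u : R | (0 <= u <= 1)%R]) mu [set x | A (u * (x + 1))%R])%E.

Definition d1W (R : realType) (mu : probability R R) (n m : nat) : \bar R :=
  ereal_sup [set (`| EW n m h - Rintegral mu setT h |)%:E | h in lip1 (R:=R)].

Definition harm_num (R : realType) (k : nat) : R :=
  \sum_(1 <= j < k.+1) (j%:R)^-1.

From HB Require Import structures.
From mathcomp Require Import all_boot all_order all_algebra.
From mathcomp Require Import all_classical all_reals all_analysis.
From mathcomp Require Import unstable measurable_realfun uniform_distribution.
From mathcomp Require Import ring lra zify.
Set Implicit Arguments.
Unset Strict Implicit.
Unset Printing Implicit Defensive.
Import Order.TTheory GRing.Theory Num.Theory.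
Import numFieldNormedType.Exports.
Local Open Scope classical_set_scope.
Local Open Scope ring_scope.

(* Test the distance against the 1-Lipschitz maps h(x) = x - c.  For
   Quickselect, E h(W_{n,m}) = E C_{n,m}/n - 1 - c, where E C_{n,m} is given by
   Knuth's closed form, checked against the one-step recursion of the
   algorithm.  For the Dickman law, D = U(D + 1) gives
   E D^+ = (E D^+ + 1)/2, so E D = 1 (or E D = +oo, see [dickman_mean]).
   With c = 0 the distance is then at least |E C_{n,m}/n - 2|, which is bounded
   below using H_{n+1-m} <= H_n and log n <= H_n. *)

Section Quickselect.
Variable R : realType.
Local Notation H := (harm_num R).

Lemma harm_num0 : H 0 = 0.
Proof. by rewrite /harm_num big_geq. Qed.

Lemma harm_numS k : H k.+1 = H k + k.+1%:R^-1.
Proof. by rewrite /harm_num big_nat_recr. Qed.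

Lemma harm_num_ge0 k : 0 <= H k.
Proof. by rewrite sumr_ge0 // => j _; rewrite invr_ge0. Qed.

Lemma le_harm_num i j : (i <= j)%N -> H i <= H j.
Proof.
move=> ij; rewrite /harm_num [leRHS](@big_cat_nat _ _ _ i.+1) //= lerDl.
by rewrite sumr_ge0 // => l _; rewrite invr_ge0.
Qed.

Lemma ln_le_harm_num k : ln (k.+1%:R : R) <= H k.
Proof.
elim: k => [|k IH]; first by rewrite ln1 harm_num0.
have k1_gt0 : (0 : R) < k.+1%:R by rewrite ltr0n.
have -> : (k.+2%:R : R) = k.+1%:R * (1 + k.+1%:R^-1).
  by rewrite mulrDr mulr1 mulfV ?gt_eqF // -addn1 natrD.
rewrite lnM ?posrE ?addr_gt0 ?invr_gt0 // harm_numS lerD // le_ln1Dx //.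
by rewrite (lt_le_trans (ltrN10 R)) // invr_ge0 ltW.
Qed.

(* Knuth's closed form of E C_{n,m}. *)
Definition qs_mean (n m : nat) : R :=
  2 * (n%:R + 3 + (n%:R + 1) * H n - (m%:R + 2) * H m
       - (n%:R + 3 - m%:R) * H (n.+1 - m)).

Lemma sum_qs_mean_left d m :
  \sum_(m <= L < d + m) qs_mean L m =
    let N := (d + m)%:R in let M := m%:R in let D := d%:R in
    N ^+ 2 + 7 * N - M * N - 7 * M + (N ^+ 2 + N) * H (d + m)
    + (M ^+ 2 + 3 * M - 4 * N - 2 * M * N) * H m - (D ^+ 2 + 5 * D + 4) * H d.
Proof.
elim: d => [|d IH]; first by rewrite big_geq // /= harm_num0; ring.
rewrite addSn big_nat_recr ?leq_addl // IH /qs_mean.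
have -> : ((d + m).+1 - m = d.+1)%N by lia.
rewrite !harm_numS /= -!natr1 !natrD.
by field; rewrite -natrD !natr1 !pnatr_eq0.
Qed.

Lemma sum_qs_mean_right d m :
  \sum_(0 <= j < m) qs_mean (d + j.+1) j.+1 =
    let M := m.+1%:R in let D := d%:R in
    M ^+ 2 + 7 * M - 4 + D * M - D + (D + M) * (D + M + 1) * H (d + m.+1)
    - M * (M + 3) * H m.+1 - (D ^+ 2 + 2 * D * M + D + 6 * M - 4) * H d.+1.
Proof.
elim: m => [|m IH].
  rewrite big_geq //= addn1 !harm_numS harm_num0.
  by field; rewrite nat1r pnatr_eq0.
rewrite big_nat_recr //= IH /qs_mean.
have -> : ((d + m.+1).+1 - m.+1 = d.+1)%N by lia.
rewrite !addnS !harm_numS -!natr1 !natrD.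
by field; rewrite -!natrD !natr1 !pnatr_eq0.
Qed.

Definition qs_mean_branch (n m L : nat) : R :=
  if L.+1 == m then 0
  else if (m <= L)%N then qs_mean L m else qs_mean (n - L.+1) (m - L.+1).

Lemma qs_mean_rec n m : (0 < m <= n)%N ->
  n%:R * qs_mean n m =
    n%:R * (n%:R - 1) + \sum_(0 <= L < n) qs_mean_branch n m L.
Proof.
case: m => [|k] // /andP[_ le_kn].
have [d ->] : exists d, n = (d + k.+1)%N by exists (n - k.+1)%N; lia.
have lt_kn : (k < d + k.+1)%N by lia.
rewrite (big_cat_nat (leq0n k) (ltnW lt_kn)) (big_ltn lt_kn) /=.
have -> : qs_mean_branch (d + k.+1) k.+1 k = 0 by rewrite /qs_mean_branch eqxx.
have -> : \sum_(k.+1 <= L < d + k.+1) qs_mean_branch (d + k.+1) k.+1 L =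
          \sum_(k.+1 <= L < d + k.+1) qs_mean L k.+1.
  by apply: eq_big_nat => L /andP[kL _]; rewrite /qs_mean_branch gtn_eqF // kL.
have -> : \sum_(0 <= L < k) qs_mean_branch (d + k.+1) k.+1 L =
          \sum_(0 <= j < k) qs_mean (d + j.+1) j.+1.
  rewrite big_nat_rev; apply: eq_big_nat => L /andP[_ Lk].
  rewrite /qs_mean_branch add0n ifF; last by apply/eqP; lia.
  by rewrite ifF; [congr qs_mean; lia | apply/negbTE; lia].
rewrite add0r sum_qs_mean_left sum_qs_mean_right /qs_mean.
have -> : ((d + k.+1).+1 - k.+1 = d.+1)%N by lia.
rewrite !harm_numS -!natr1 !natrD.
by field; rewrite !natr1 !pnatr_eq0.
Qed.

Definition mass (s : seq (R * nat)) : R := \sum_(pc <- s) pc.1.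
Definition moment (s : seq (R * nat)) : R := \sum_(pc <- s) pc.1 * pc.2%:R.

Lemma mass_rescale s a b :
  mass [seq (pc.1 / a, (pc.2 + b)%N) | pc <- s] = mass s / a.
Proof. by rewrite /mass big_map mulr_suml. Qed.

Lemma moment_rescale s a b :
  moment [seq (pc.1 / a, (pc.2 + b)%N) | pc <- s] = (moment s + b%:R * mass s) / a.
Proof.
rewrite /moment /mass big_map mulr_sumr -big_split mulr_suml.
by apply: eq_bigr => pc _ /=; rewrite natrD; ring.
Qed.

Definition qs_sublaw (f n m L : nat) : seq (R * nat) :=
  if L.+1 == m then [:: (1, 0%N)]
  else if (m <= L)%N then qs_law R f L m
  else qs_law R f (n - L.+1) (m - L.+1).

Lemma qs_lawS f n m : qs_law R f.+1 n m =
  flatten [seq [seq (pc.1 / n%:R, (pc.2 + n.-1)%N) | pc <- qs_sublaw f n m L]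
          | L <- iota 0 n].
Proof. by []. Qed.

Lemma qs_law_mass_moment f n m : (0 < m <= n)%N -> (n <= f)%N ->
  mass (qs_law R f n m) = 1 /\ moment (qs_law R f n m) = qs_mean n m.
Proof.
elim: f n m => [|f IH] n m /andP[m_gt0 le_mn] le_nf; first lia.
have sub_ok L : (L < n)%N -> mass (qs_sublaw f n m L) = 1 /\
    moment (qs_sublaw f n m L) = qs_mean_branch n m L.
  rewrite /qs_sublaw /qs_mean_branch; case: eqP => [_ _|Lm Ln].
    by rewrite /mass /moment !big_seq1 mulr0.
  by case: ifP => mL; apply: IH; lia.
have n_neq0 : n%:R != 0 :> R by rewrite pnatr_eq0 -lt0n (leq_trans m_gt0).
have iotaE : iota 0 n = index_iota 0 n by rewrite /index_iota subn0.
rewrite qs_lawS; split.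
  rewrite [mass _]big_flatten big_map iotaE /=.
  rewrite (eq_big_nat _ _ (F2 := fun _ => (n%:R)^-1)); last first.
    move=> L /andP[_ Ln].
    by rewrite -/(mass _) mass_rescale (proj1 (sub_ok L Ln)) mul1r.
  by rewrite sumr_const_nat subn0 -[_ *+ n]mulr_natr mulVf.
rewrite [moment _]big_flatten big_map iotaE /=.
rewrite (eq_big_nat _ _
  (F2 := fun L => (qs_mean_branch n m L + n.-1%:R) / n%:R)); last first.
  move=> L /andP[_ Ln]; have [mass1 momentE] := sub_ok L Ln.
  by rewrite -/(moment _) moment_rescale mass1 momentE mulr1.
rewrite -mulr_suml big_split /= sumr_const_nat subn0 -[_ *+ n]mulr_natr.
apply: (mulfI n_neq0); rewrite qs_mean_rec ?m_gt0 // -subn1 natrB ?(leq_trans m_gt0) //.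
by field.
Qed.

Lemma EW_subr n m c : (0 < m <= n)%N ->
  EW n m (fun x => x - c) = qs_mean n m / n%:R - 1 - c.
Proof.
move=> mn; have [mass1 momentE] := qs_law_mass_moment mn (leqnn n).
rewrite /EW; transitivity
  (moment (qs_law R n n m) / n%:R - (1 + c) * mass (qs_law R n n m)).
  by rewrite /moment /mass mulr_suml mulr_sumr -sumrB; apply: eq_bigr => pc _; ring.
by rewrite mass1 momentE; ring.
Qed.

Lemma qs_mean_excess_ge n m : (0 < m <= n)%N ->
  `|m%:R - 2| * ln (n%:R : R) - `|(m%:R + 2) * H m - 3| <= `|qs_mean n m / 2 - n%:R|.
Proof.
case: n => [|n]; first by case: m.
move=> /andP[m_gt0 le_mn].
have ln_le_H : ln (n.+1%:R : R) <= H n.+1.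
  by rewrite (le_trans (ln_le_harm_num n)) ?le_harm_num.
have -> : qs_mean n.+1 m / 2 - n.+1%:R = 3 + (n.+1%:R + 1) * H n.+1
    - (m%:R + 2) * H m - (n.+1%:R + 3 - m%:R) * H (n.+2 - m) by rewrite /qs_mean; field.
case: (ltngtP m 1) => [|lt1m|->]; first by rewrite ltnNge m_gt0.
  have le2m : (2 : R) <= m%:R by rewrite (ler_nat R 2 m).
  rewrite (ger0_norm (x := m%:R - 2)) ?subr_ge0 //.
  apply: le_trans (ler_norm _).
  have le_mn' : (m%:R : R) <= n.+1%:R by rewrite ler_nat.
  have H_tail : H (n.+2 - m) <= H n.+1 by apply: le_harm_num; lia.
  have : (n.+1%:R + 3 - m%:R) * H (n.+2 - m) <= (n.+1%:R + 3 - m%:R) * H n.+1.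
    by apply: ler_wpM2l H_tail; lra.
  have : (m%:R - 2) * ln n.+1%:R <= (m%:R - 2) * H n.+1.
    by apply: ler_wpM2l ln_le_H; lra.
  have := ler_norm ((m%:R + 2) * H m - 3).
  lra.
have H1 : H 1 = 1 by rewrite harm_numS harm_num0 add0r invr1.
rewrite subn1 /= H1 mulr1.
have -> : 3 + (n.+1%:R + 1) * H n.+1 - (1%:R + 2) - (n.+1%:R + 3 - 1%:R) * H n.+1
    = - H n.+1 :> R by ring.
have -> : (1%:R - 2 : R) = -1 by ring.
have -> : (1%:R + 2 - 3 : R) = 0 by ring.
by rewrite !normrN normr1 normr0 mul1r subr0 ger0_norm ?harm_num_ge0.
Qed.

Lemma qs_mean_dist_ge n m : (0 < m <= n)%N ->
  2 * (`|m%:R - 2| * ln (n%:R : R) - `|(m%:R + 2) * H m - 3|) / n%:R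
  <= `|qs_mean n m / n%:R - 2|.
Proof.
move=> /andP[m_gt0 le_mn].
have n_gt0 : (0 : R) < n%:R by rewrite ltr0n (leq_trans m_gt0).
have -> : qs_mean n m / n%:R - 2 = 2 * (qs_mean n m / 2 - n%:R) / n%:R.
  by field; rewrite gt_eqF.
rewrite !normrM normfV !normr_nat.
by rewrite ler_pM2r ?invr_gt0 // ler_pM2l // qs_mean_excess_ge ?m_gt0.
Qed.
End Quickselect.

Lemma integral_cst_probability {d} {T : measurableType d} {R : realType}
    (P : probability T R) (r : R) :
  (\int[P]_x r%:E = r%:E)%E.
Proof.
by rewrite integral_cst // -[X in (_ * X)%E]/(P setT) probability_setT mule1.
Qed.

Lemma integral_itv01_id (R : realType) :
  (\int[lebesgue_measure]_(x in `[(0%R : R), 1%R]) x%:E = (2^-1 : R)%:E)%E.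
Proof.
have id_cont : {within `[(0 : R), 1], continuous id}.
  by apply: continuous_subspaceT => x; exact: cvg_id.
have r01 : 0 <= (1 : R) <= 1 by rewrite ler01 lexx.
have sym := @integration_by_substitution_onem R id 1 r01 id_cont.
rewrite onem1 /= in sym.
have sum1 : (\int[lebesgue_measure]_(x in `[(0%R : R), 1%R]) (x%:E + (x.~)%:E) = 1)%E.
  under eq_integral do rewrite -EFinD /onem addrC subrK.
  rewrite integral_cst // mul1e.
  by have := lebesgue_measure_itv `[(0 : R), 1]; rewrite /= lte01 oppr0 adde0.
have x_ge0 (x : R) : `[0, 1]%classic x -> (0 <= x%:E)%E.
  by rewrite /= in_itv /= lee_fin => /andP[].
have onem_x_ge0 (x : R) : `[0, 1]%classic x -> (0 <= (x.~)%:E)%E.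
  by rewrite /= in_itv /= lee_fin => /andP[? ?]; rewrite onem_ge0.
have m_id : measurable_fun [set` `[(0%R : R), 1%R]] (fun x : R => x%:E).
  by apply/measurable_EFinP; exact: measurable_funTS.
have m_onem : measurable_fun [set` `[(0%R : R), 1%R]] (fun x : R => (x.~)%:E).
  by apply/measurable_EFinP; apply: measurable_funB.
move: sum1; rewrite ge0_integralD // -sym.
have : (0 <= \int[lebesgue_measure]_(x in `[(0%R : R), 1%R]) x%:E)%E.
  by apply: integral_ge0 => x; exact: x_ge0.
case: (\int[lebesgue_measure]_(x in _) _)%E => // r _ /eqP.
rewrite -EFinD eqe => /eqP r2.
by congr EFin; lra.
Qed.

Lemma integral_max0_subr_pinfty (R : realType) (P : probability R R) (c : R) :
  (\int[P]_x (Num.max x 0)%:E = +oo ->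
   \int[P]_x (Num.max x 0 - c)%:E = +oo)%E.
Proof.
move=> pos_infty; pose g (x : R) := (Num.max x 0 - c)%:E.
have m_max0 : measurable_fun setT (fun x : R => Num.max x 0).
  by apply: measurable_maxr => //; exact: measurable_cst.
have mg : measurable_fun setT g.
  by apply/measurable_EFinP; apply: measurable_funB => //; exact: measurable_cst.
have max0_ge0 (x : R) : 0 <= Num.max x 0 by rewrite le_max lexx orbT.
have c_le : c <= Num.max c 0 by rewrite le_max lexx.
have neg_le : (\int[P]_x g^\- x <= (Num.max c 0)%:E)%E.
  rewrite -[leRHS](integral_cst_probability P); apply: ge0_le_integral => //.
  - exact: measurable_funeneg.
  - move=> x _; rewrite funenegE /g -EFin_max lee_fin ge_max max0_ge0 andbT.
    by have := max0_ge0 x; lra.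
have pos_infty' : (\int[P]_x g^\+ x = +oo)%E.
  have : (\int[P]_x (Num.max x 0)%:E <= \int[P]_x (g^\+ x + (Num.max c 0)%:E))%E.
    apply: ge0_le_integral => //.
    - by move=> x _; rewrite lee_fin max0_ge0.
    - exact/measurable_EFinP.
    - by apply: emeasurable_funD; [exact: measurable_funepos | exact: measurable_cst].
    - move=> x _; rewrite funeposE /g -EFin_max -EFinD lee_fin.
      by have := le_max (Num.max x 0 - c) (Num.max x 0 - c) 0; rewrite lexx /=; lra.
  rewrite ge0_integralD //;
    [|exact: measurable_funepos | by move=> x _; rewrite lee_fin max0_ge0].
  by rewrite integral_cst_probability pos_infty leye_eq; case: (\int[P]_x g^\+ x)%E.
have neg_ge0 : (0 <= \int[P]_x g^\- x)%E.
  by apply: integral_ge0 => x _; exact: funeneg_ge0.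
rewrite integralE pos_infty'.
by move: neg_le neg_ge0; case: (\int[P]_x g^\- x)%E.
Qed.

Section dickman_mean.
Variables (R : realType) (mu : probability R R).
Hypothesis dickman_mu : dickman_law mu.

Let U := uniform_prob (@ltr01 R).
Let dickman_map (z : (measurableTypeR R * R)%type) : R := z.1 * (z.2 + 1).

Lemma measurable_dickman_map : measurable_fun setT dickman_map.
Proof.
have m_id : measurable_fun setT (fun x : measurableTypeR R => (x : R)).
  by move=> _ B mB; rewrite setTI.
apply: measurable_funM; first exact: measurableT_comp m_id measurable_fst.
by apply: measurable_funD => //; exact: measurable_snd.
Qed.

Lemma dickman_pushforward A :
  measurable A -> mu A = pushforward (U \x mu)%E dickman_map A.
Proof.
move=> mA; rewrite /pushforward /product_measure1 /=.
have mpre : measurable (dickman_map @^-1` A).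
  by rewrite -[_ @^-1` _]setTI; exact: measurable_dickman_map.
rewrite integral_uniform; last 2 first.
- exact: measurable_fun_xsection.
- by move=> x; exact: measure_ge0.
have -> : [set` `[(0 : R), 1]] = [set u | 0 <= u <= 1].
  by apply/seteqP; split => x /=; rewrite in_itv.
rewrite subr0 invr1 mul1e (proj2 dickman_mu A mA).
by apply: eq_integral => u _; rewrite xsectionE.
Qed.

Lemma dickman_neg_null : mu [set x : R | x < 0] = 0.
Proof.
have -> : [set x : R | x < 0] = ~` [set x : R | 0 <= x].
  by apply/seteqP; split => x /=; rewrite ltNge => /negP.
rewrite probability_setC ?(proj1 dickman_mu) ?subee //.
rewrite (_ : [set x : R | 0 <= x] = [set` `[0, +oo[]) ?measurable_itv //.
by apply/seteqP; split => x /=; rewrite in_itv /= andbT.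
Qed.

Lemma dickman_ae_ge0 (f g : R -> \bar R) :
  (forall x, 0 <= x -> f x = g x) -> ae_eq mu setT f g.
Proof.
move=> fg; exists [set x : R | x < 0]; split.
- have -> : [set x : R | x < 0] = [set` `]-oo, 0[].
    by apply/seteqP; split => x /=; rewrite in_itv.
  exact: measurable_itv.
- exact: dickman_neg_null.
- by move=> x /= fgx; rewrite ltNge; apply/negP => x_ge0; apply: fgx => _; exact: fg.
Qed.

Let pos (x : R) : \bar R := (Num.max x 0)%:E.

Let measurable_pos : measurable_fun setT pos.
Proof.
by apply/measurable_EFinP; apply: measurable_maxr => //; exact: measurable_cst.
Qed.

Let pos_ge0 x : (0 <= pos x)%E.
Proof. by rewrite lee_fin le_max lexx orbT. Qed.

Let measurable_pos_succ : measurable_fun setT (fun x : R => pos ((x : R) + 1)).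
Proof.
apply/measurable_EFinP; apply: measurable_maxr; last exact: measurable_cst.
by apply: measurable_funD => //; exact: measurable_cst.
Qed.

Lemma integral_pos_dickman :
  (\int[mu]_x pos x = (2^-1)%:E * \int[mu]_x pos ((x : R) + 1))%E.
Proof.
rewrite (eq_measure_integral (pushforward (U \x mu)%E dickman_map));
  [exact: measurable_dickman_map | move=> m_map
  | by move=> ? A mA _; exact: dickman_pushforward].
rewrite ge0_integral_pushforward // preimage_setT.
have m_comp : measurable_fun setT (pos \o dickman_map).
  exact: measurableT_comp measurable_pos measurable_dickman_map.
have comp_ge0 z : (0 <= (pos \o dickman_map) z)%E by exact: pos_ge0.
rewrite (fubini_tonelli1 _ m_comp comp_ge0) integral_uniform; last 2 first.
- exact: (measurable_fun_fubini_tonelli_F (m2 := mu) _ m_comp comp_ge0).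
- by move=> u; apply: integral_ge0 => x _; exact: pos_ge0.
rewrite subr0 invr1 mul1e.
transitivity (\int[lebesgue_measure]_(u in `[(0%R : R), 1%R])
                (u%:E * \int[mu]_x pos ((x : R) + 1)))%E.
  apply: eq_integral => u /[!inE] /andP[u_ge0 _].
  have max_scale y : Num.max (u * y) 0 = u * Num.max y 0 by rewrite maxr_pMr // mulr0.
  rewrite /fubini_F /=.
  under eq_integral do rewrite /pos /dickman_map /= max_scale EFinM.
  by rewrite ge0_integralZl_EFin // => x _; exact: pos_ge0.
rewrite ge0_integralZr ?integral_itv01_id //.
- by move=> x; rewrite /= in_itv /= lee_fin => /andP[].
- by apply: integral_ge0 => x _; exact: pos_ge0.
Qed.

Lemma integral_pos_succ :
  (\int[mu]_x pos ((x : R) + 1) = \int[mu]_x pos x + 1)%E.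
Proof.
transitivity (\int[mu]_x (pos x + 1))%E.
  apply: ae_eq_integral => //.
  - by apply: emeasurable_funD => //; exact: measurable_cst.
  - apply: dickman_ae_ge0 => x x_ge0.
    by rewrite /pos !max_l ?EFinD // ?addr_ge0.
by rewrite ge0_integralD // integral_cst_probability.
Qed.

Lemma integral_pos_dickman_cases :
  (\int[mu]_x pos x = 1 \/ \int[mu]_x pos x = +oo)%E.
Proof.
have := integral_pos_dickman; rewrite integral_pos_succ.
have : (0 <= \int[mu]_x pos x)%E by apply: integral_ge0 => x _; exact: pos_ge0.
case: (\int[mu]_x pos x)%E => [r| |] //= r_ge0; last by right.
rewrite -EFinD -EFinM => /eqP; rewrite eqe => /eqP r_eq.
by left; congr EFin; lra.
Qed.

(* The second alternative cannot be excluded without uniqueness of the Dickman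
   law; there [Rintegral] takes the junk value [fine +oo = 0]. *)
Lemma dickman_mean : Rintegral mu setT (fun x => x) = 1 \/
  forall c, Rintegral mu setT (fun x => x - c) = 0.
Proof.
case: integral_pos_dickman_cases => pos_mean; [left | right => c];
  rewrite /Rintegral.
- suff -> : (\int[mu]_x x%:E = \int[mu]_x pos x)%E by rewrite pos_mean.
  apply: ae_eq_integral => //.
  by apply: dickman_ae_ge0 => x x_ge0; rewrite /pos max_l.
- suff -> : (\int[mu]_x (x - c)%:E = \int[mu]_x (Num.max x 0 - c)%:E)%E.
    by rewrite integral_max0_subr_pinfty.
  apply: ae_eq_integral => //.
  - by apply/measurable_EFinP; apply: measurable_funB => //; exact: measurable_cst.
  - apply/measurable_EFinP; apply: measurable_funB; last exact: measurable_cst.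
    by apply: measurable_maxr => //; exact: measurable_cst.
  - by apply: dickman_ae_ge0 => x x_ge0; rewrite max_l.
Qed.
End dickman_mean.

Theorem theorem1p3 (R : realType) (mu : probability R R) (m n : nat) :
  dickman_law mu -> (1 <= m)%N -> (m <= n)%N ->
  ((2 * (`|m%:R - 2| * ln (n%:R : R) - `|(m%:R + 2) * harm_num R m - 3|)
      / n%:R)%:E <= d1W mu n m)%E.
Proof.
move=> dickman_mu m_ge1 le_mn; have mn : (0 < m <= n)%N by rewrite m_ge1.
have d1W_ge h : lip1 h -> ((`|EW n m h - Rintegral mu setT h|)%:E <= d1W mu n m)%E.
  by move=> h_lip; apply: ereal_sup_ubound; exists h.
have lip_subr c : lip1 (fun x : R => x - c).
  by move=> x y; rewrite opprB addrA subrK.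
have := qs_mean_dist_ge R mn; set B := (2 * _ / _) => B_le.
case: (dickman_mean dickman_mu) => [mean1 | mean0].
  apply: le_trans (d1W_ge _ (lip_subr 0)); rewrite lee_fin EW_subr //.
  have -> : (fun x : R => x - 0) = id by apply: funext => x; rewrite subr0.
  by rewrite mean1 subr0 -addrA -opprD.
apply: le_trans (d1W_ge _ (lip_subr (qs_mean R n m / n%:R - 1 - `|B|))).
rewrite lee_fin EW_subr // mean0 subr0 opprB addrC subrK normr_id.
exact: ler_norm.
Qed.
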